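(* Let $n\ge 1$, $B\in\{1,\dots,n\}$ and $p\in(\tfrac12,1)$, and consider the crowdfunding game $\Gamma(B,n)$ described in the context. Then $\Gamma(B,n)$ has a \emph{unique} symmetric non-trivial Bayes-Nash equilibrium $\sigma=(\sigma_1,\dots,\sigma_n)$. Moreover, there is $\lambda=\lambda(B,n)\in[0,1)$ such that for every player $i$, $\sigma_i(H)=1$ and $\sigma_i(L)=\lambda$.
   Context: The crowdfunding game $\Gamma(B,n)$ with parameter $p\in(\tfrac12,1)$: there are $n$ players $N=\{1,\dots,n\}$ and a threshold $B\in\{1,\dots,n\}$. A state of nature $\omega\in\Omega=\{H,L\}$ is drawn with $\Pr(\omega=H)=\Pr(\omega=L)=\tfrac12$. Conditional on $\omega$, each player $i$ independently receives a private signal $s_i\in\{H,L\}$ with $\Pr(s_i=\omega\mid\omega)=p$. Each player chooses an action $a_i\in\{0,1\}$ (1 = commit to buy, 0 = opt out), simultaneously. Payoffs: $u_i(a,\omega)=1$ if $a_i=1$, $\sum_{j\in N}a_j\ge B$ and $\omega=H$; $u_i(a,\omega)=-1$ if $a_i=1$, $\sum_{j\in N}a_j\ge B$ and $\omega=L$; and $u_i=0$ otherwise. A strategy of player $i$ is a map $\sigma_i:\{H,L\}\to[0,1]$, where $\sigma_i(s)$ is the probability that $i$ plays action $1$ after signal $s$. A Bayes-Nash equilibrium is a profile $\sigma$ such that no player $i$ can increase her expected utility by replacing $\sigma_i$ with any other map $f:\{H,L\}\to\{0,1\}$. A profile $\sigma$ is non-trivial if $\Pr_\sigma(\sum_{i}a_i\ge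 B)>0$, and symmetric if $\sigma_i=\sigma_j$ for all players $i,j$. *)

From HB Require Import structures.
From mathcomp Require Import all_boot all_order all_algebra.
From mathcomp Require Import reals.
Set Implicit Arguments. Unset Strict Implicit. Unset Printing Implicit Defensive.
Import Order.TTheory GRing.Theory Num.Theory.
Local Open Scope ring_scope.

(* States and signals are encoded as bool:
   true = H, false = L.  Actions are bool: true = 1 (commit), false = 0.
   A (mixed) strategy profile is sigma : 'I_n -> bool -> R, where
   sigma i s is the probability that player i plays 1 after signal s. *)

Section Crowdfunding.
Variable R : realType.
Variable n : nat.

Definition sig_prob (p : R) (w s : bool) : R := if s == w then p else 1 - p.

Definition act_prob (x : R) (a : bool) : R := if a then x else 1 - x.

Definition ncommit (a : {ffun 'I_n -> bool}) : nat := \sum_(j < n) nat_of_bool (a j).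

Definition payoff (B : nat) (a : {ffun 'I_n -> bool}) (i : 'I_n) (w : bool) : R :=
  if a i && (B <= ncommit a)%N then (if w then 1 else -1) else 0.

Definition prof_prob (sigma : 'I_n -> bool -> R) (s a : {ffun 'I_n -> bool}) : R :=
  \prod_(j < n) act_prob (sigma j (s j)) (a j).

Definition signals_prob (p : R) (w : bool) (s : {ffun 'I_n -> bool}) : R :=
  \prod_(j < n) sig_prob p w (s j).

Definition exp_util (p : R) (B : nat) (sigma : 'I_n -> bool -> R) (i : 'I_n) : R :=
  \sum_(w : bool) 2^-1 * \sum_(s : {ffun 'I_n -> bool})
     signals_prob p w s * \sum_(a : {ffun 'I_n -> bool})
        prof_prob sigma s a * payoff B a i w.

Definition success_prob (p : R) (B : nat) (sigma : 'I_n -> bool -> R) : R :=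
  \sum_(w : bool) 2^-1 * \sum_(s : {ffun 'I_n -> bool})
     signals_prob p w s * \sum_(a : {ffun 'I_n -> bool} | (B <= ncommit a)%N)
        prof_prob sigma s a.

Definition is_profile (sigma : 'I_n -> bool -> R) : Prop :=
  forall i s, 0 <= sigma i s <= 1.

Definition deviate (sigma : 'I_n -> bool -> R) (i : 'I_n) (f : bool -> bool) :
  'I_n -> bool -> R :=
  fun j => if j == i then (fun s => (nat_of_bool (f s))%:R) else sigma j.

Definition is_BNE (p : R) (B : nat) (sigma : 'I_n -> bool -> R) : Prop :=
  is_profile sigma /\
  forall (i : 'I_n) (f : bool -> bool),
    exp_util p B (deviate sigma i f) i <= exp_util p B sigma i.

Definition nontrivial (p : R) (B : nat) (sigma : 'I_n -> bool -> R) : Prop :=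
  0 < success_prob p B sigma.

Definition symmetric (sigma : 'I_n -> bool -> R) : Prop :=
  forall i j : 'I_n, forall s, sigma i s = sigma j s.

Definition sym_nt_BNE (p : R) (B : nat) (sigma : 'I_n -> bool -> R) : Prop :=
  is_BNE p B sigma /\ nontrivial p B sigma /\ symmetric sigma.

End Crowdfunding.

From Pilot Require Import Defs.
From HB Require Import structures.
From mathcomp Require Import all_boot all_order all_algebra.
From mathcomp Require Import all_classical all_reals all_analysis.
From mathcomp Require Import ring lra zify.
Set Implicit Arguments.
Unset Strict Implicit.
Unset Printing Implicit Defensive.
Import Order.TTheory GRing.Theory Num.Theory.
Local Open Scope ring_scope.

(* Conditional on the state, actions are independent: player j commits with
   probability Pr(s = H | state) sigma_j(H) + Pr(s = L | state) sigma_j(L).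
   Against others who all play (x, y), committing after signal H (resp. L) is
   worth gainH x y = p reach qH - (1 - p) reach qL (resp. gainL x y =
   (1 - p) reach qH - p reach qL), where qH, qL are the others' commitment
   rates in the two states and reach q = F(1 - q) for the binomial
   distribution function F of the number of others opting out.  The payoff is
   linear in one's own strategy, and gainH > 0 in every symmetric non-trivial
   equilibrium, so an equilibrium has x = 1 and y = lambda with
   gainL 1 lambda <= 0, with equality if lambda > 0.  The sign of gainL 1 y is
   that of F((1 - p)(1 - y)) / F(p (1 - y)) - p / (1 - p), and this ratio
   strictly decreases in y (compare the Bernstein sums term by term); with
   gainL 1 1 < 0 this makes lambda unique, and the intermediate value theorem
   provides it. *)

Section RealPolynomials.
Variable R : realType.

Lemma derive_horner (P : {poly R}) x : 'D_1 (horner P) x = P^`().[x].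
Proof. by rewrite -derive1E -derivE. Qed.

Lemma poly_ratio_decr (N D : {poly R}) (a b : R) :
  (forall y, a <= y <= b -> 0 < D.[y]) ->
  (forall y, a < y < b -> N^`().[y] * D.[y] < N.[y] * D^`().[y]) ->
  {in `[a, b] &, {homo (fun y => N.[y] / D.[y]) : y0 y1 /~ y0 < y1}}.
Proof.
move=> Dpos cross.
have Dneq0 y : y \in `[a, b] -> D.[y] != 0.
  by rewrite in_itv /= => /Dpos /gt_eqF ->.
pose f := (horner N * (fun y => (horner D y)^-1))%R.
have der y : y \in `[a, b] -> derivable f y 1.
  move=> hy; apply: derivableM; first exact: derivable_horner.
  by apply: derivableV; [exact: Dneq0 | exact: derivable_horner].
change {in `[a, b] &, {homo f : y0 y1 /~ y0 < y1}}.
apply: ltr0_derive1_lt_cc.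
- by move=> y hy; apply: der; apply: subset_itv_oo_cc.
- move=> y hy; have yab : y \in `[a, b] by apply: subset_itv_oo_cc.
  rewrite derive1E deriveM; last 2 first.
  + exact: derivable_horner.
  + by apply: derivableV; [exact: Dneq0 | exact: derivable_horner].
  rewrite deriveV; last 2 first.
  + exact: Dneq0.
  + exact: derivable_horner.
  rewrite !derive_horner /GRing.scale /=.
  have D0 : 0 < D.[y] by apply: Dpos; move: yab; rewrite in_itv.
  have -> : N.[y] * (- D.[y] ^- 2 * D^`().[y]) + D.[y]^-1 * N^`().[y]
          = (N^`().[y] * D.[y] - N.[y] * D^`().[y]) / D.[y] ^+ 2
    by field; rewrite gt_eqF.
  rewrite pmulr_llt0 ?invr_gt0 ?exprn_gt0 // subr_lt0; apply: cross.
  by move: hy; rewrite in_itv.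
- by apply: derivable_within_continuous => y hy; apply: der.
Qed.

Implicit Types (m j : nat) (u : R).

Definition binom_cdf m j : {poly R} :=
  \sum_(k < j.+1) 'C(m, k)%:R *: ('X^k * (1 - 'X) ^+ (m - k)).

Lemma horner_binom_cdf m j u :
  (binom_cdf m j).[u] = \sum_(k < j.+1) 'C(m, k)%:R * (u ^+ k * (1 - u) ^+ (m - k)).
Proof. by rewrite horner_sum; apply: eq_bigr => k _; rewrite !hornerE. Qed.

Lemma coef_linear_pow (a b : R) m k :
  ((a%:P + b%:P * 'X) ^+ m)`_k = 'C(m, k)%:R * (b ^+ k * a ^+ (m - k)).
Proof.
rewrite exprDn coef_sum.
under eq_bigr => i _ do
  rewrite coefMn exprMn -!polyC_exp mulrA -polyCM coefCM coefXn -mulrnAl eq_sym mulr_natr mulrb.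
rewrite -big_mkcond (big_ord1_eq _ (fun i => a ^+ (m - i) * b ^+ i *+ 'C(m, i))) ltnS.
case: leqP => [km | mk]; first by rewrite mulr_natl mulrC.
by rewrite bin_small // mul0r.
Qed.

Lemma binom_cdf0 m j : (binom_cdf m j).[0] = 1.
Proof.
rewrite horner_binom_cdf big_ord_recl big1 => [|k _]; last by rewrite expr0n mul0r mulr0.
by rewrite bin0 subr0 !expr1n !mul1r addr0.
Qed.

Lemma binom_cdf_total m u : (binom_cdf m m).[u] = 1.
Proof.
rewrite horner_binom_cdf; transitivity ((1 - u + u) ^+ m); last by rewrite subrK expr1n.
by rewrite exprDn; apply: eq_bigr => k _; rewrite mulr_natl mulrC.
Qed.

Lemma binom_cdf_ge0 m j u : 0 <= u <= 1 -> 0 <= (binom_cdf m j).[u].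
Proof.
move=> /andP[u0 u1]; rewrite horner_binom_cdf; apply: sumr_ge0 => k _.
by rewrite !mulr_ge0 ?exprn_ge0 ?subr_ge0.
Qed.

Lemma binom_cdf_gt0 m j u : 0 <= u < 1 -> 0 < (binom_cdf m j).[u].
Proof.
move=> /andP[u0 u1]; rewrite horner_binom_cdf big_ord_recl /= bin0 mul1r expr0 mul1r subn0.
apply: ltr_pwDl; first by rewrite exprn_gt0 // subr_gt0.
by apply: sumr_ge0 => k _; rewrite !mulr_ge0 ?exprn_ge0 // subr_ge0 ltW.
Qed.

Lemma deriv_binom_cdf m j : (j <= m)%N ->
  (binom_cdf m j)^`() = - (m * 'C(m.-1, j))%:R *: ('X^j * (1 - 'X) ^+ (m.-1 - j)).
Proof.
have d1 : (1 - 'X : {poly R})^`() = -1 by rewrite derivB -polyC1 derivC derivX sub0r.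
elim: j => [|j IH] jm.
  rewrite /binom_cdf big_ord1 !bin0 expr0 !mul1r !subn0 muln1 derivZ deriv_exp d1.
  by rewrite -!mul_polyC !polyCN !polyCMn; ring.
rewrite /binom_cdf big_ord_recr /= -/(binom_cdf m j) derivD IH; last by lia.
rewrite derivZ derivM derivXn deriv_exp d1 exprS mul_bin_diag mul_bin_down.
have -> : (m.-1 - j = m - j.+1)%N by lia.
have -> : ((m - j.+1).-1 = m.-1 - j.+1)%N by lia.
by rewrite -!mul_polyC !polyCN !polyCMn !natrM; ring.
Qed.

Lemma horner_deriv_binom_cdf m j u : (j <= m)%N ->
  (binom_cdf m j)^`().[u] = - (m * 'C(m.-1, j))%:R * (u ^+ j * (1 - u) ^+ (m.-1 - j)).
Proof. by move=> jm; rewrite deriv_binom_cdf // !hornerE. Qed.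

Lemma binom_cdf_nonincr m j u1 u2 : (j <= m)%N -> 0 <= u1 -> u1 <= u2 -> u2 <= 1 ->
  (binom_cdf m j).[u2] <= (binom_cdf m j).[u1].
Proof.
move=> jm u10 u12 u21.
apply: (@ler0_derive1_le_cc R (horner (binom_cdf m j)) 0 1).
- by move=> x _; exact: derivable_horner.
- move=> x; rewrite in_itv /= => /andP[x0 x1].
  rewrite -derivE horner_deriv_binom_cdf // mulNr oppr_le0.
  by rewrite !mulr_ge0 ?exprn_ge0 ?subr_ge0 // ltW.
- by apply: derivable_within_continuous => x _; exact: derivable_horner.
- by rewrite in_itv /=; apply/andP; split; lra.
- by rewrite in_itv /=; apply/andP; split; lra.
- exact: u12.
Qed.

(* Termwise comparison: the [k]-th summand on each side is a common positive
   factor times [(a (1 - b t))^(j-k+1)], resp. [(b (1 - a t))^(j-k+1)]. *)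
Lemma binom_cdf_cross_lt m j (a b t : R) : (j < m)%N ->
  0 < a -> a < b -> b < 1 -> 0 < t <= 1 ->
  a * (a * t) ^+ j * (1 - a * t) ^+ (m.-1 - j) * (binom_cdf m j).[b * t]
  < b * (b * t) ^+ j * (1 - b * t) ^+ (m.-1 - j) * (binom_cdf m j).[a * t].
Proof.
move=> jm a0 ab b1 /andP[t0 t1].
have at1 : 0 < 1 - a * t by nra.
have bt1 : 0 < 1 - b * t by nra.
rewrite !horner_binom_cdf !big_distrr /=.
apply: ltr_sum; first by apply/hasP; exists ord0; rewrite ?mem_index_enum.
move=> k _; have kj := ltn_ord k.
set r := (m.-1 - j)%N; set s := (j - k)%N.
have expj c : c ^+ j = c ^+ k * c ^+ s by rewrite -exprD /s subnKC // -ltnS.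
have expmk c : c ^+ (m - k) = c ^+ r * c ^+ s.+1.
  by rewrite -exprD; congr (_ ^+ _); rewrite /r /s; lia.
rewrite !expj !expmk.
set Z := 'C(m, k)%:R * (a * t) ^+ k * (b * t) ^+ k * (1 - a * t) ^+ r
         * (1 - b * t) ^+ r * t ^+ s.
have Z0 : 0 < Z.
  rewrite /Z; do ![apply: mulr_gt0|apply: exprn_gt0]; rewrite ?ltr0n ?bin_gt0; nra || lia.
have -> : a * ((a * t) ^+ k * (a * t) ^+ s) * (1 - a * t) ^+ r *
    ('C(m, k)%:R * ((b * t) ^+ k * ((1 - b * t) ^+ r * (1 - b * t) ^+ s.+1)))
    = Z * (a * (1 - b * t)) ^+ s.+1 by rewrite /Z !exprMn !exprS; ring.
have -> : b * ((b * t) ^+ k * (b * t) ^+ s) * (1 - b * t) ^+ r *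
    ('C(m, k)%:R * ((a * t) ^+ k * ((1 - a * t) ^+ r * (1 - a * t) ^+ s.+1)))
    = Z * (b * (1 - a * t)) ^+ s.+1 by rewrite /Z !exprMn !exprS; ring.
by rewrite ltr_pM2l // ltrXn2r // ?mulr_ge0 ?(ltW at1) ?(ltW bt1) //; nra.
Qed.

Lemma horner_comp_scaled_compl (F : {poly R}) c y : (F \Po (c%:P * (1 - 'X))).[y] = F.[c * (1 - y)].
Proof. by rewrite horner_comp !hornerE. Qed.

Lemma horner_deriv_comp_scaled_compl (F : {poly R}) c y :
  (F \Po (c%:P * (1 - 'X)))^`().[y] = - c * F^`().[c * (1 - y)].
Proof.
have dq : (c%:P * (1 - 'X))^`() = - c%:P.
  by rewrite derivM derivC mul0r add0r derivB derivX -polyC1 derivC sub0r mulrN1.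
by rewrite deriv_comp dq hornerM hornerN hornerC horner_comp_scaled_compl mulrC.
Qed.

Lemma binom_cdf_ratio_decr m j (a b : R) : (j < m)%N -> 0 < a -> a < b -> b < 1 ->
  {in `[0, 1] &, {homo (fun y => (binom_cdf m j).[a * (1 - y)] / (binom_cdf m j).[b * (1 - y)])
     : y0 y1 /~ y0 < y1}}.
Proof.
move=> jm a0 ab b1.
pose G c := binom_cdf m j \Po (c%:P * (1 - 'X)).
have Gpos y : 0 <= y <= 1 -> 0 < (G b).[y].
  move=> /andP[y0 y1]; rewrite horner_comp_scaled_compl; apply: binom_cdf_gt0.
  by apply/andP; split; nra.
have cross y : 0 < y < 1 -> (G a)^`().[y] * (G b).[y] < (G a).[y] * (G b)^`().[y].
  move=> /andP[y0 y1].
  rewrite !horner_comp_scaled_compl !horner_deriv_comp_scaled_compl.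
  rewrite !(horner_deriv_binom_cdf _ (ltnW jm)).
  have K0 : 0 < (m * 'C(m.-1, j))%:R :> R by rewrite ltr0n muln_gt0 bin_gt0; lia.
  have t01 : 0 < 1 - y <= 1 by apply/andP; split; lra.
  have := @binom_cdf_cross_lt m j a b (1 - y) jm a0 ab b1 t01.
  by rewrite -(ltr_pM2l K0) => ?; nra.
move=> y0 y1 hy0 hy1; rewrite -!horner_comp_scaled_compl.
exact: (poly_ratio_decr Gpos cross hy0 hy1).
Qed.

End RealPolynomials.

Section Outcomes.
Variables (R : realType) (n : nat).
Implicit Types (p : R) (w : bool) (sigma : 'I_n -> bool -> R) (pi : 'I_n -> R)
  (a s : {ffun 'I_n -> bool}).

Definition commit_prob p w sigma j : R :=
  sig_prob p w true * sigma j true + sig_prob p w false * sigma j false.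

Definition indep_prob pi a : R := \prod_j act_prob (pi j) (a j).

Definition reach_prob (B : nat) pi : R := \sum_a indep_prob pi a * (B <= ncommit a)%N%:R.

Definition reach_prob_given (B : nat) pi i : R :=
  reach_prob B (fun j => if j == i then 1 else pi j).

Lemma sig_prob_sum p w : sig_prob p w true + sig_prob p w false = 1.
Proof. by case: w; rewrite /sig_prob /=; ring. Qed.

Lemma sum_signals_prof_prob p w sigma a :
  \sum_s signals_prob p w s * prof_prob sigma s a = indep_prob (commit_prob p w sigma) a.
Proof.
rewrite /signals_prob /prof_prob /indep_prob.
rewrite (eq_bigr (fun s => \prod_j (sig_prob p w (s j) * act_prob (sigma j (s j)) (a j))))
  => [|s _]; last by rewrite big_split.
rewrite -(bigA_distr_bigA (fun j b => sig_prob p w b * act_prob (sigma j b) (a j))).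
apply: eq_bigr => j _; rewrite big_bool /= /commit_prob /act_prob.
have -> : sig_prob p w false = 1 - sig_prob p w true.
  by rewrite -(sig_prob_sum p w) addrC addKr.
by case: (a j); ring.
Qed.

Lemma marginalize_signals p w sigma (g : {ffun 'I_n -> bool} -> R) :
  \sum_s signals_prob p w s * \sum_a prof_prob sigma s a * g a
  = \sum_a indep_prob (commit_prob p w sigma) a * g a.
Proof.
under eq_bigr do rewrite big_distrr.
rewrite exchange_big /=; apply: eq_bigr => a _.
by rewrite -sum_signals_prof_prob big_distrl; apply: eq_bigr => s _; rewrite mulrA.
Qed.

Lemma success_probE p B sigma :
  success_prob p B sigma = \sum_w 2^-1 * reach_prob B (commit_prob p w sigma).
Proof.
rewrite /success_prob; apply: eq_bigr => w _; congr (_ * _).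
rewrite /reach_prob -marginalize_signals; apply: eq_bigr => s _; congr (_ * _).
by rewrite big_mkcond; apply: eq_bigr => a _; case: ifP; rewrite ?mulr1 ?mulr0.
Qed.

Lemma sum_commit_reach B pi i :
  \sum_a indep_prob pi a * (a i && (B <= ncommit a)%N)%:R = pi i * reach_prob_given B pi i.
Proof.
rewrite /reach_prob_given /reach_prob big_distrr; apply: eq_bigr => a _ /=.
rewrite /indep_prob (bigD1 i) //= [in RHS](bigD1 i) //= eqxx.
rewrite [in RHS](eq_bigr (fun j => act_prob (pi j) (a j))) => [|j /negbTE -> //].
by rewrite /act_prob; case: (a i) => /=; ring.
Qed.

Lemma exp_utilE p B sigma i :
  exp_util p B sigma i =
  2^-1 * (commit_prob p true sigma i * reach_prob_given B (commit_prob p true sigma) i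
        - commit_prob p false sigma i * reach_prob_given B (commit_prob p false sigma) i).
Proof.
rewrite /exp_util big_bool /= !marginalize_signals -!sum_commit_reach.
rewrite -mulrDr -sumrB -big_split /=; congr (_ * _); apply: eq_bigr => a _.
by rewrite /payoff; case: (a i && _) => /=; ring.
Qed.

Lemma reach_prob_given_eq B pi1 pi2 i : (forall j, j != i -> pi1 j = pi2 j) ->
  reach_prob_given B pi1 i = reach_prob_given B pi2 i.
Proof.
move=> eq12; apply: eq_bigr => a _; congr (_ * _); apply: eq_bigr => j _.
by case: eqP => // /eqP /eq12 ->.
Qed.

Lemma indep_prob_ge0 pi a : (forall j, 0 <= pi j <= 1) -> 0 <= indep_prob pi a.
Proof.
move=> pi01; apply: prodr_ge0 => j _; have /andP[pj0 pj1] := pi01 j.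
by rewrite /act_prob; case: (a j); rewrite ?subr_ge0.
Qed.

Lemma reach_prob_ge0 B pi : (forall j, 0 <= pi j <= 1) -> 0 <= reach_prob B pi.
Proof. by move=> pi01; apply: sumr_ge0 => a _; rewrite mulr_ge0 ?indep_prob_ge0. Qed.

Lemma reach_prob_gt0 B pi : (B <= n)%N -> (forall j, 0 < pi j <= 1) -> 0 < reach_prob B pi.
Proof.
move=> Bn pi01.
have pi01' j : 0 <= pi j <= 1 by case/andP: (pi01 j) => /ltW -> ->.
pose all_commit : {ffun 'I_n -> bool} := [ffun => true].
have ncommit_all : ncommit all_commit = n.
  by rewrite /ncommit (eq_bigr (fun _ => 1%N)) ?sum1_card ?card_ord // => j _; rewrite ffunE.
rewrite /reach_prob (bigD1 all_commit) //= ncommit_all Bn mulr1.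
apply: ltr_pwDl; last by apply: sumr_ge0 => a _; rewrite mulr_ge0 ?indep_prob_ge0.
by apply: prodr_gt0 => j _; rewrite ffunE; case/andP: (pi01 j).
Qed.

Lemma reach_prob0 B pi : (0 < B)%N -> (forall j, pi j = 0) -> reach_prob B pi = 0.
Proof.
move=> B0 pi0; apply: big1 => a _.
case: (pickP (fun j => a j)) => [j aj | no_commit].
  by rewrite /indep_prob (bigD1 j) //= /act_prob aj pi0 !mul0r.
have -> : ncommit a = 0%N by rewrite /ncommit big1 // => j _; rewrite no_commit.
by rewrite leqNgt B0 mulr0.
Qed.

Definition noptout a : nat := (\sum_j ~~ a j)%N.

Lemma ncommit_noptout a : (ncommit a + noptout a)%N = n.
Proof.
rewrite /ncommit /noptout -big_split /=.
by under eq_bigr do rewrite addnC addn_negb; rewrite sum1_card card_ord.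
Qed.

Lemma sum_indep_prob_Xnoptout pi :
  \sum_a indep_prob pi a *: 'X^(noptout a) = \prod_j ((pi j)%:P + (1 - pi j)%:P * 'X).
Proof.
rewrite (eq_bigr (fun a => \prod_j (act_prob (pi j) (a j) *: 'X^(~~ a j)))); last first.
  by move=> a _; rewrite scaler_prod prodrXr.
rewrite -(bigA_distr_bigA (fun j b => act_prob (pi j) b *: 'X^(~~ b))).
by apply: eq_bigr => j _; rewrite big_bool /= expr0 expr1 -!mul_polyC mulr1.
Qed.

Lemma reach_probE B pi : (B <= n)%N ->
  reach_prob B pi = \sum_(k < (n - B).+1) (\prod_j ((pi j)%:P + (1 - pi j)%:P * 'X))`_k.
Proof.
move=> Bn; rewrite -sum_indep_prob_Xnoptout.
have reachE a : (B <= ncommit a)%N%:R = \sum_(k < (n - B).+1) ('X^(noptout a))`_k :> R.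
  rewrite (eq_bigr (fun k : 'I_(n - B).+1 => if (k : nat) == noptout a then 1 else 0)).
    rewrite -big_mkcond (big_ord1_eq _ (fun _ => 1)) ltnS.
    have -> : (noptout a <= n - B)%N = (B <= ncommit a)%N.
      by move: (ncommit_noptout a) => ?; apply/idP/idP; lia.
    by case: (B <= ncommit a)%N.
  by move=> k _; rewrite coefXn; case: eqP.
rewrite /reach_prob; under eq_bigr do rewrite reachE big_distrr.
rewrite exchange_big /=; apply: eq_bigr => k _.
by rewrite coef_sum; apply: eq_bigr => a _; rewrite coefZ.
Qed.

Lemma reach_prob_given_const B q i : (B <= n)%N ->
  reach_prob_given B (fun _ => q) i = (binom_cdf R n.-1 (n - B)).[1 - q].
Proof.
move=> Bn; rewrite /reach_prob_given reach_probE // horner_binom_cdf.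
have -> : \prod_j ((if j == i then 1 else q)%:P + (1 - (if j == i then 1 else q))%:P * 'X)
          = (q%:P + (1 - q)%:P * 'X) ^+ n.-1.
  rewrite (bigD1 i) //= eqxx subrr polyC0 mul0r addr0 polyC1 mul1r.
  rewrite (eq_bigr (fun _ => q%:P + (1 - q)%:P * 'X)) => [|j /negbTE -> //].
  by rewrite prodr_const cardC1 card_ord.
apply: eq_bigr => k _.
by rewrite coef_linear_pow subKr.
Qed.

End Outcomes.

Lemma best_response_mixed (R : realFieldType) (A C x y : R) :
  0 <= x <= 1 -> 0 <= y <= 1 ->
  (forall b1 b0 : bool, b1%:R * A + b0%:R * C <= x * A + y * C) ->
  [/\ 0 < A -> x = 1, C < 0 -> y = 0 & 0 < C -> y = 1].
Proof.
move=> /andP[x0 x1] /andP[y0 y1] br.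
have xA (b : bool) : b%:R * A <= x * A.
  have [C0|C0] := ltrP 0 C.
    by have := br b true; rewrite mul1r; nra.
  by have := br b false; rewrite mul0r addr0; nra.
have yC (b : bool) : b%:R * C <= y * C.
  have [A0|A0] := ltrP 0 A.
    by have := br true b; rewrite mul1r; nra.
  by have := br false b; rewrite mul0r add0r; nra.
have := xA true; have := yC true; have := yC false.
rewrite /= !mul1r !mul0r => yC0 yC1 xA1.
by split=> s; nra.
Qed.

Section SymmetricEquilibrium.
Variables (R : realType) (n B : nat) (p : R).
Hypotheses (B_range : (1 <= B <= n)%N) (p_range : 2^-1 < p < 1).
Implicit Types (sigma tau : 'I_n -> bool -> R) (x y q : R).

Local Notation F := (binom_cdf R n.-1 (n - B)).

Lemma p_bounds : [/\ 0 < 1 - p, 1 - p < p & p < 1].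
Proof.
have [hp hp1] := andP p_range.
have : 2^-1 * 2 < p * 2 by rewrite ltr_pM2r.
by rewrite mulVf ?pnatr_eq0 // => h2; split; lra.
Qed.

(* The probability that at least [B] players commit when the player commits and
   each of the [n - 1] others commits independently with probability [q]
   (lemma [reach_prob_given_const]). *)
Definition reach q : R := F.[1 - q].

Lemma reach_gt0 q : 0 < q <= 1 -> 0 < reach q.
Proof. by move=> /andP[q0 q1]; apply: binom_cdf_gt0; apply/andP; split; lra. Qed.

Lemma reach1 : reach 1 = 1.
Proof. by rewrite /reach subrr binom_cdf0. Qed.

Lemma reach_nondecr q1 q2 : 0 <= q1 -> q1 <= q2 -> q2 <= 1 -> reach q1 <= reach q2.
Proof.
move=> q10 q12 q21; apply: binom_cdf_nonincr; try lra.
by move: B_range; clear; lia.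
Qed.

Definition rateH x y : R := p * x + (1 - p) * y.
Definition rateL x y : R := (1 - p) * x + p * y.

(* Expected payoff of committing after signal H (resp. L) when every other
   player commits with probability [x] after H and [y] after L. *)
Definition gainH x y : R := p * reach (rateH x y) - (1 - p) * reach (rateL x y).
Definition gainL x y : R := (1 - p) * reach (rateH x y) - p * reach (rateL x y).

Lemma exp_util_sym sigma tau i :
  Defs.symmetric sigma -> (forall j, j != i -> tau j = sigma j) ->
  exp_util p B tau i = 2^-1 * (tau i true * gainH (sigma i true) (sigma i false)
                             + tau i false * gainL (sigma i true) (sigma i false)).
Proof.
move=> sym tau_sigma.
set x := sigma i true; set y := sigma i false.
have reach_tau w : reach_prob_given B (commit_prob p w tau) i
                   = reach (if w then rateH x y else rateL x y).
  rewrite /reach -(reach_prob_given_const _ i); last by case/andP: B_range.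
  apply: reach_prob_given_eq => j ji; rewrite /commit_prob tau_sigma // !(sym j i).
  by case: w; rewrite /sig_prob /rateH /rateL.
rewrite exp_utilE !reach_tau /gainH /gainL /commit_prob /sig_prob /=; ring.
Qed.

Lemma BNE_pure_deviation sigma i : Defs.symmetric sigma -> is_BNE p B sigma ->
  forall b1 b0 : bool,
  b1%:R * gainH (sigma i true) (sigma i false) + b0%:R * gainL (sigma i true) (sigma i false)
  <= sigma i true * gainH (sigma i true) (sigma i false)
   + sigma i false * gainL (sigma i true) (sigma i false).
Proof.
move=> sym [_ bne] b1 b0.
have := bne i (fun s => if s then b1 else b0).
rewrite (exp_util_sym sym) => [|j /negbTE ji]; last by rewrite /deviate ji.
rewrite (exp_util_sym sym) // /deviate eqxx /=.
by rewrite ler_pM2l // invr_gt0 ltr0n.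
Qed.

Lemma gainH_gainL x y : p * gainH x y = (1 - p) * gainL x y + (2 * p - 1) * reach (rateH x y).
Proof. by rewrite /gainH /gainL; ring. Qed.

Lemma gainH_gt0 x y : 0 <= y <= x -> 0 < x <= 1 -> 0 < gainH x y.
Proof.
move=> /andP[y0 yx] /andP[x0 x1]; have [p0 pp p1] := p_bounds.
have rH : 0 < rateH x y <= 1 by rewrite /rateH; apply/andP; split; nra.
have rLH : rateL x y <= rateH x y by rewrite /rateL /rateH; nra.
have rL0 : 0 <= rateL x y by rewrite /rateL; nra.
have := reach_gt0 rH; have := reach_nondecr rL0 rLH (proj2 (andP rH)).
rewrite /gainH; nra.
Qed.

Lemma gainL1E y : gainL 1 y = (1 - p) * F.[(1 - p) * (1 - y)] - p * F.[p * (1 - y)].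
Proof.
rewrite /gainL /reach /rateH /rateL.
have -> : 1 - (p * 1 + (1 - p) * y) = (1 - p) * (1 - y) by ring.
by have -> : 1 - ((1 - p) * 1 + p * y) = p * (1 - y) by ring.
Qed.

Lemma gainL11_lt0 : gainL 1 1 < 0.
Proof.
have [_ pp _] := p_bounds.
by rewrite gainL1E subrr !mulr0 binom_cdf0; lra.
Qed.

Lemma gainL1_gt0_before_root y0 y1 : 0 <= y0 -> y0 < y1 -> y1 <= 1 ->
  gainL 1 y1 = 0 -> 0 < gainL 1 y0.
Proof.
move=> y00 y01 y11; have [p0 pp p1] := p_bounds.
rewrite !gainL1E.
have [B_le1|B_gt1] := leqP B 1.
  have -> : (n - B = n.-1)%N by move: B_range B_le1; clear; lia.
  by rewrite !binom_cdf_total; lra.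
have jm : (n - B < n.-1)%N by move: B_range B_gt1; clear; lia.
have in01 y : 0 <= y <= 1 -> y \in `[0, 1] by rewrite in_itv.
have Fb y : 0 <= y <= 1 -> 0 < F.[p * (1 - y)].
  by move=> /andP[? ?]; apply: binom_cdf_gt0; apply/andP; split; nra.
have Fa y : 0 <= y <= 1 -> 0 <= F.[(1 - p) * (1 - y)].
  by move=> /andP[? ?]; apply: binom_cdf_ge0; apply/andP; split; nra.
have y0_01 : 0 <= y0 <= 1 by apply/andP; split; lra.
have y1_01 : 0 <= y1 <= 1 by apply/andP; split; lra.
have := binom_cdf_ratio_decr jm p0 pp p1 (in01 _ y1_01) (in01 _ y0_01) y01.
have := Fb _ y0_01; have := Fb _ y1_01; have := Fa _ y0_01; have := Fa _ y1_01.
set A1 := F.[(1 - p) * (1 - y1)]; set A0 := F.[(1 - p) * (1 - y0)].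
set B1 := F.[p * (1 - y1)]; set B0 := F.[p * (1 - y0)].
move=> A1_ge0 A0_ge0 B1_gt0 B0_gt0.
rewrite ltr_pdivrMr // mulrAC ltr_pdivlMr //; nra.
Qed.

Definition lambda_spec y : Prop :=
  [/\ 0 <= y, y < 1, gainL 1 y <= 0 & 0 < y -> gainL 1 y = 0].

Lemma lambda_spec_exists : exists y, lambda_spec y.
Proof.
have [K0_le0|K0_gt0] := lerP (gainL 1 0) 0.
  by exists 0; split; rewrite ?ltxx ?ltr01.
pose K : {poly R} :=
  (1 - p) *: (F \Po ((1 - p)%:P * (1 - 'X))) - p *: (F \Po (p%:P * (1 - 'X))).
have KE y : gainL 1 y = K.[y] by rewrite gainL1E /K !hornerE !horner_comp_scaled_compl.
have [c c01 Kc] : exists2 c, c \in `[0, 1] & K.[c] = 0.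
  apply: (@IVT _ (horner K)); first exact: ler01.
    by apply: derivable_within_continuous => y _; exact: derivable_horner.
  have := gainL11_lt0; rewrite ge_min le_max !KE => K1_lt0; rewrite KE in K0_gt0.
  by apply/andP; split; apply/orP; [right|left]; lra.
move: c01; rewrite in_itv /= => /andP[c0 c1].
have c_lt1 : c < 1.
  rewrite lt_neqAle c1 andbT; apply/eqP => c_eq1.
  by have := gainL11_lt0; rewrite KE -c_eq1 Kc ltxx.
by exists c; split; rewrite // KE Kc.
Qed.

Lemma lambda_spec_uniq y1 y2 : lambda_spec y1 -> lambda_spec y2 -> y1 = y2.
Proof.
move=> [y10 y11 K1 K1_0] [y20 y21 K2 K2_0].
have [y12|y21'|//] := ltgtP y1 y2.
- have := gainL1_gt0_before_root y10 y12 (ltW y21) (K2_0 (le_lt_trans y10 y12)); lra.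
- have := gainL1_gt0_before_root y20 y21' (ltW y11) (K1_0 (le_lt_trans y20 y21')); lra.
Qed.

Lemma threshold_profile_BNE y : lambda_spec y ->
  sym_nt_BNE p B (fun (_ : 'I_n) (s : bool) => if s then 1 else y).
Proof.
case=> y0 y1 Ky Ky0; set sigma := fun (_ : 'I_n) (s : bool) => if s then 1 else y.
have sym : Defs.symmetric sigma by [].
have [p0 pp p1] := p_bounds.
have gH : 0 < gainH 1 y by apply: gainH_gt0; apply/andP; split; lra.
have yK : y * gainL 1 y = 0.
  by have [/Ky0 ->|y_le0] := ltrP 0 y; [rewrite mulr0 | rewrite (_ : y = 0) ?mul0r //; lra].
have half_gt0 : 0 < 2^-1 :> R by rewrite invr_gt0 ltr0n.
split; [split | split] => //.
- by move=> i [] /=; apply/andP; split; lra.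
- move=> i f; rewrite (exp_util_sym sym) => [|j /negbTE ji]; last by rewrite /deviate ji.
  rewrite (exp_util_sym sym) // /deviate eqxx /= ler_pM2l // yK addr0 mul1r.
  by case: (f true); case: (f false) => /=; lra.
- rewrite /nontrivial success_probE big_bool /=.
  have hH : 0 < reach_prob B (commit_prob p true sigma).
    apply: reach_prob_gt0; first by case/andP: B_range.
    by move=> j; rewrite /commit_prob /sig_prob /=; apply/andP; split; nra.
  have hL : 0 <= reach_prob B (commit_prob p false sigma).
    by apply: reach_prob_ge0 => j; rewrite /commit_prob /sig_prob /=; apply/andP; split; nra.
  nra.
Qed.

Lemma sym_profile_trivial sigma i : Defs.symmetric sigma ->
  sigma i true = 0 -> sigma i false = 0 -> success_prob p B sigma = 0.
Proof.
move=> sym x0 y0.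
have B_gt0 : (0 < B)%N by case/andP: B_range.
rewrite success_probE big1 // => w _; rewrite reach_prob0 ?mulr0 // => j.
by rewrite /commit_prob !(sym j i) x0 y0 !mulr0 addr0.
Qed.

Lemma sym_nt_BNE_threshold sigma i : sym_nt_BNE p B sigma ->
  sigma i true = 1 /\ lambda_spec (sigma i false).
Proof.
move=> [[prof bne] [nt sym]]; have [p0 pp p1] := p_bounds.
have [] := best_response_mixed (prof i true) (prof i false)
  (BNE_pure_deviation i sym (conj prof bne)).
have /andP[x0 x1] := prof i true; have /andP[y0 y1] := prof i false.
set x := sigma i true in x0 x1 *; set y := sigma i false in y0 y1 *.
move=> gH_x gL_y0 gL_y1.
have xy_gt0 : 0 < x \/ 0 < y.
  have [|x_le0] := ltrP 0 x; [by left|]; have [|y_le0] := ltrP 0 y; [by right|].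
  by move: nt; rewrite /nontrivial (sym_profile_trivial sym (_ : x = 0) (_ : y = 0)) ?ltxx //; lra.
have gH_gt0 : 0 < gainH x y.
  have [gL_lt0|gL_ge0] := ltrP (gainL x y) 0.
    have y_eq0 := gL_y0 gL_lt0.
    by apply: gainH_gt0; apply/andP; split; case: xy_gt0; lra.
  have rH : 0 < rateH x y <= 1 by rewrite /rateH; apply/andP; split; case: xy_gt0; nra.
  by have := gainH_gainL x y; have := reach_gt0 rH; nra.
have x_eq1 := gH_x gH_gt0; split => //.
rewrite x_eq1 in gL_y0 gL_y1.
have gL_le0 : gainL 1 y <= 0.
  rewrite leNgt; apply/negP => gL_gt0.
  have y_eq1 := gL_y1 gL_gt0; rewrite y_eq1 in gL_gt0.
  by have := gainL11_lt0; lra.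
split => //.
- rewrite lt_neqAle y1 andbT; apply/eqP => y_eq1.
  by move: gL_y0; rewrite y_eq1 => /(_ gainL11_lt0); lra.
- move=> y_gt0; apply/eqP; rewrite eq_le gL_le0 /= leNgt; apply/negP => /gL_y0 y_eq0; lra.
Qed.

End SymmetricEquilibrium.

Theorem theorem1 (R : realType) (n B : nat) (p : R) :
  (1 <= n)%N -> (1 <= B <= n)%N -> 2^-1 < p < 1 ->
  exists sigma : 'I_n -> bool -> R,
    [/\ sym_nt_BNE p B sigma,
        (forall sigma' : 'I_n -> bool -> R, sym_nt_BNE p B sigma' ->
           forall i s, sigma' i s = sigma i s) &
        exists lambda : R, 0 <= lambda < 1 /\
          forall i : 'I_n, sigma i true = 1 /\ sigma i false = lambda].
Proof.
move=> _ B_range p_range.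
have [lambda spec] := lambda_spec_exists n B p_range.
exists (fun _ s => if s then 1 else lambda); split.
- exact: threshold_profile_BNE.
- move=> sigma' eq' i s; have [x_eq1 spec'] := sym_nt_BNE_threshold B_range p_range i eq'.
  by case: s => /=; [exact: x_eq1 | exact: lambda_spec_uniq spec' spec].
- by exists lambda; case: spec => ? ? _ _; split => //; apply/andP.
Qed.
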